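(* Let $E_1,E_2,E_3$ be pairwise disjoint (possibly empty) sets of edges on $\gamma_2$ with vertices in $[n]$. Suppose the edges of $E_1\cup E_2\cup E_3$ can be linearly ordered as $e_1,\dots,e_m$ such that: edges of $E_i$ come before edges of $E_j$ whenever $i<j$; for all $1\le i<j\le m$, either $e_i<_3e_j$ or $e_i$ and $e_j$ do not cross; and the edges of $E_2$ are pairwise non-crossing. Then there is a triangulation $T\in S(n,2)$ such that $e\le_3T$ for every $e\in E_1$, $e\in T$ for every $e\in E_2$, and $e\ge_3T$ (i.e. $T\le_3 e$) for every $e\in E_3$.
   Context: $\gamma_d=\{(t,t^2,\dots,t^d):t\in\mathbb{R}\}$. Fix $t_1<\dots<t_n$ and points $\gamma_2(t_i)$ identified with $i\in[n]$; $C(n,2)$ is their convex hull and $S(n,2)$ the set of triangulations of $C(n,2)$ with vertices in $[n]$. An edge is a 2-subset of $[n]$ identified with the segment it spans; two edges cross (overlap) if their segments meet outside their common vertices. For a simplex $\alpha\subseteq[n]$, $h_\alpha:\mathrm{conv}(\alpha)\to\mathbb{R}$ gives the last coordinate of the point of the convex hull of $\{\gamma_3(t_i):i\in\alpha\}$ projecting to $p$. $\alpha<_3\beta$ means $\alpha,\beta$ overlap and $h_\alpha\le h_\beta$ on $\mathrm{conv}(\alpha)\cap\mathrm{conv}(\beta)$. For $T\in S(n,2)$, $h_T(p)=h_\rho(p)$ for $p\in\mathrm{conv}(\rho)$, $\rho\in T$; $e\le_3T$ means $h_e\le h_T$ on $\mathrm{conv}(e)$, and $T\le_3e$ means $h_T\le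 h_e$ on $\mathrm{conv}(e)$. *)

From mathcomp Require Import all_boot all_order all_algebra.
From mathcomp Require Import reals.
Set Implicit Arguments. Unset Strict Implicit. Unset Printing Implicit Defensive.
Import Order.TTheory GRing.Theory Num.Theory.
Local Open Scope ring_scope.

Section Cyclic.
Variables (R : realType) (n : nat) (t : 'I_n -> R).

Definition g2 (i : 'I_n) : R * R := (t i, t i ^+ 2).

(* [lift a p z] : the point of conv{gamma_3(t_i) : i in a} with last
   coordinate z projects to p in the plane.  In particular p is in conv(a). *)
Definition lift (a : {set 'I_n}) (p : R * R) (z : R) : Prop :=
  exists lam : 'I_n -> R,
    [/\ (forall i, 0 <= lam i), (forall i, i \notin a -> lam i = 0),
        \sum_i lam i = 1,
        p = (\sum_i lam i * t i, \sum_i lam i * t i ^+ 2)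
      & z = \sum_i lam i * t i ^+ 3].

Definition in_conv (a : {set 'I_n}) (p : R * R) : Prop := exists z, lift a p z.

Definition is_edge (e : {set 'I_n}) : Prop := #|e| = 2%N.

Definition cross (e f : {set 'I_n}) : Prop :=
  exists p, [/\ in_conv e p, in_conv f p &
                ~ (exists i, i \in e :&: f /\ p = g2 i)].

(* h_a <= h_b on conv(a) /\ conv(b) *)
Definition height_le (a b : {set 'I_n}) : Prop :=
  forall p z1 z2, lift a p z1 -> lift b p z2 -> z1 <= z2.

(* a <_3 b for edges (overlap = cross) *)
Definition lt3 (e f : {set 'I_n}) : Prop := cross e f /\ height_le e f.

Definition triangulation (T : {set {set 'I_n}}) : Prop :=
  [/\ (forall r, r \in T -> #|r| = 3%N),
      (forall p, in_conv setT p <-> exists2 r, r \in T & in_conv r p)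
    & (forall r s, r \in T -> s \in T ->
         forall p, (in_conv r p /\ in_conv s p) <-> in_conv (r :&: s) p)].

Definition edge_le_T (e : {set 'I_n}) (T : {set {set 'I_n}}) : Prop :=
  forall r, r \in T -> height_le e r.

Definition T_le_edge (T : {set {set 'I_n}}) (e : {set 'I_n}) : Prop :=
  forall r, r \in T -> height_le r e.

Definition edge_in_T (e : {set 'I_n}) (T : {set {set 'I_n}}) : Prop :=
  exists2 r, r \in T & e \subset r.

End Cyclic.

From Pilot Require Import Defs.
From mathcomp Require Import all_boot all_order all_algebra.
From mathcomp Require Import reals.
From mathcomp Require Import ring lra zify.
Import Order.TTheory GRing.Theory Num.Theory.
Local Open Scope ring_scope.
Set Implicit Arguments. Unset Strict Implicit. Unset Printing Implicit Defensive.

(* Put A := E1 :|: E2 (edges to lie weakly below T) and B := E2 :|: E3 (edges to lie weakly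
   above T).  Of two crossing chords a0 a1 and b0 b1 of the moment curve with
   b0 < a0 < b1 < a1, the lifted chord b0 b1 lies strictly below a0 a1 at the crossing
   point; so the ordering hypothesis and the non-crossing of E2 forbid this interleaving for
   a in A and b in B.  Under that single condition the polygon is triangulated recursively:
   over a chord [lo, hi] put the triangle whose apex is the first vertex that is not strictly
   under a B-edge inside [lo, hi].  All chords produced are then interleaved neither by an
   A-edge from the right nor by a B-edge from the left; in particular an edge of E2, being
   in both A and B, crosses no chord and is therefore an edge of T.
   Heights are compared with cubics: a monic cubic, nonpositive on the vertices of one
   simplex and nonnegative on those of the other, orders their height functions, since its
   average against lifting weights differs from the height by a function of the projected
   point only.  Covering and intersection properties of T come from the same averaging
   argument applied to quadratics vanishing at the ends of a chord. *)

Ltac prod_sign := first [ lra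
  | apply: mulr_ge0; prod_sign | apply: mulr_le0; prod_sign
  | apply: mulr_ge0_le0; prod_sign | apply: mulr_le0_ge0; prod_sign ].

Definition cubic (R : pzRingType) (r1 r2 r3 u : R) := (u - r1) * (u - r2) * (u - r3).

Section RealSigns.
Variable R : realFieldType.

Lemma exists_cubic_sep_edge_triangle (ta tb tx ty tz : R) :
  ta < tb -> tx < ty -> ty < tz ->
  ~ (tx < ta /\ ta < ty /\ ty < tb) -> ~ (ty < ta /\ ta < tz /\ tz < tb) ->
  ~ (tx < ta /\ ta < tz /\ tz < tb) ->
  exists r1 r2 r3, [/\ cubic r1 r2 r3 ta <= 0, cubic r1 r2 r3 tb <= 0,
     0 <= cubic r1 r2 r3 tx, 0 <= cubic r1 r2 r3 ty & 0 <= cubic r1 r2 r3 tz].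
Proof.
rewrite /cubic => hab hxy hyz N1 N2 N3.
have outside_xyz u : u <= tx \/ ty <= u /\ u <= tz -> (u - tx) * (u - ty) * (u - tz) <= 0.
  by case=> [|[]] *; prod_sign.
have [ha|ha] := lerP ta tx.
  have [hb|hb] := lerP tb tx.
    by exists tx, ty, tz; split; [apply: outside_xyz; lra|apply: outside_xyz; lra|prod_sign..].
  have [hb'|hb'] := ltrP tb ty; first by exists ta, tb, tx; split; prod_sign.
  have [hb''|hb''] := lerP tb tz.
    by exists tx, ty, tz; split; [apply: outside_xyz; lra|apply: outside_xyz; lra|prod_sign..].
  by exists ta, tb, tz; split; prod_sign.
have [ha'|ha'] := ltrP ta ty.
  have [hb|hb] := lerP tb ty; last by exfalso; lra.
  by exists ta, tb, tx; split; prod_sign.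
have [ha''|ha''] := lerP ta tz; last by exists ta, tb, tx; split; prod_sign.
have [hb|hb] := lerP tb tz.
  by exists tx, ty, tz; split; [apply: outside_xyz; lra|apply: outside_xyz; lra|prod_sign..].
by exists ta, tb, tx; split; prod_sign.
Qed.

Lemma cubicN (r1 r2 r3 u : R) : cubic (- r1) (- r2) (- r3) u = - cubic r1 r2 r3 (- u).
Proof. by rewrite /cubic; ring. Qed.

Lemma exists_cubic_sep_triangle_edge (ta tb tx ty tz : R) :
  ta < tb -> tx < ty -> ty < tz ->
  ~ (ta < tx /\ tx < tb /\ tb < ty) -> ~ (ta < ty /\ ty < tb /\ tb < tz) ->
  ~ (ta < tx /\ tx < tb /\ tb < tz) ->
  exists r1 r2 r3, [/\ 0 <= cubic r1 r2 r3 ta, 0 <= cubic r1 r2 r3 tb,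
     cubic r1 r2 r3 tx <= 0, cubic r1 r2 r3 ty <= 0 & cubic r1 r2 r3 tz <= 0].
Proof.
move=> hab hxy hyz N1 N2 N3.
have [] := @exists_cubic_sep_edge_triangle (- tb) (- ta) (- tz) (- ty) (- tx); try lra.
by move=> r1 [r2 [r3 [*]]]; exists (- r1), (- r2), (- r3); rewrite !cubicN; split; lra.
Qed.

Lemma subr_mul_subr_lt0 (x u v : R) : (x - u) * (x - v) < 0 -> u < v -> u < x < v.
Proof.
move=> h uv; apply/andP; split; rewrite ltNge; apply/negP => hx;
  suff : 0 <= (x - u) * (x - v) by lra.
all: prod_sign.
Qed.

Lemma subr_mul_subr_gt0 (x u v : R) : 0 < (x - u) * (x - v) -> u < v -> x < u \/ v < x.
Proof.
move=> h uv; case: (ltrP x u) => [|ux]; [by left|right]; rewrite ltNge; apply/negP => xv.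
suff : (x - u) * (x - v) <= 0 by lra.
prod_sign.
Qed.

End RealSigns.

Lemma sum_supp1 (V : nmodType) (I : finType) (g : I -> V) (u : I) :
  (forall i, i != u -> g i = 0) -> \sum_i g i = g u.
Proof. by move=> hg; rewrite (bigD1 u) //= big1 ?addr0. Qed.

Lemma sum_supp2 (V : nmodType) (I : finType) (g : I -> V) (u v : I) : u != v ->
  (forall i, i != u -> i != v -> g i = 0) -> \sum_i g i = g u + g v.
Proof.
move=> uv hg; rewrite (bigD1 u) //= (bigD1 v) 1?eq_sym //=.
by rewrite big1 ?addr0 // => i /andP[]; exact: hg.
Qed.

(** * Weights and convex hulls on the moment curve *)

Section Weights.
Variables (R : realFieldType) (I : finType).

Lemma sum_quadratic (t lam : I -> R) (c0 c1 c2 : R) :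
  \sum_i lam i * (c0 + c1 * t i + c2 * t i ^+ 2) =
  c0 * (\sum_i lam i) + c1 * (\sum_i lam i * t i) + c2 * (\sum_i lam i * t i ^+ 2).
Proof. by rewrite !mulr_sumr -!big_split /=; apply: eq_bigr => i _; ring. Qed.

(* Every quadratic q equals La^2 q(ta) + Lb^2 q(tb) + k (u - ta) (u - tb), where La, Lb is
   the Lagrange basis of {ta, tb}. *)
Lemma quadrature_two_point (t D : I -> R) (ta tb : R) : ta != tb ->
  (forall i, 0 <= D i) -> \sum_i D i * ((t i - ta) * (t i - tb)) = 0 ->
  exists na nb, [/\ 0 <= na, 0 <= nb & forall c0 c1 c2,
    \sum_i D i * (c0 + c1 * t i + c2 * t i ^+ 2) =
    na * (c0 + c1 * ta + c2 * ta ^+ 2) + nb * (c0 + c1 * tb + c2 * tb ^+ 2)].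
Proof.
move=> tab D0 Dq; have d0 : tb - ta != 0 by rewrite subr_eq0 eq_sym.
exists (\sum_i D i * ((tb - t i) / (tb - ta)) ^+ 2).
exists (\sum_i D i * ((t i - ta) / (tb - ta)) ^+ 2).
split=> [||c0 c1 c2]; try by apply: sumr_ge0 => i _; rewrite mulr_ge0 ?sqr_ge0.
set qa := c0 + c1 * ta + c2 * ta ^+ 2; set qb := c0 + c1 * tb + c2 * tb ^+ 2.
pose k := c2 - (qa + qb) / (tb - ta) ^+ 2.
rewrite (eq_bigr (fun i => D i * ((tb - t i) / (tb - ta)) ^+ 2 * qa
    + D i * ((t i - ta) / (tb - ta)) ^+ 2 * qb + k * (D i * ((t i - ta) * (t i - tb))))).
  by rewrite !big_split /= -mulr_sumr Dq mulr0 addr0 !mulr_suml.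
by move=> i _; rewrite /k /qa /qb; field.
Qed.

(* Scale the weights on [g < 0] by Sp / Sn, the ratio of the positive and negative parts. *)
Lemma sub_weights_orthogonal (lam g : I -> R) :
  (forall i, 0 <= lam i) -> \sum_i lam i * g i <= 0 ->
  exists D : I -> R, [/\ forall i, 0 <= D i <= lam i,
    forall i, 0 <= g i -> D i = lam i & \sum_i D i * g i = 0].
Proof.
move=> l0 Slg.
pose Sn := \sum_i (if g i < 0 then lam i * - g i else 0).
pose Sp := \sum_i (if g i < 0 then 0 else lam i * g i).
have Sn0 : 0 <= Sn.
  by apply: sumr_ge0 => i _; case: ifP => // gi; rewrite mulr_ge0 // oppr_ge0 ltW.
have Sp0 : 0 <= Sp.
  by apply: sumr_ge0 => i _; case: ltP => // gi; rewrite mulr_ge0.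
have SpSn : Sp <= Sn.
  suff e : \sum_i lam i * g i = Sp - Sn by rewrite e in Slg; lra.
  by rewrite -sumrB; apply: eq_bigr => i _; case: ifP => _; ring.
pose rho := Sp / Sn.
have rho01 : 0 <= rho <= 1.
  rewrite /rho divr_ge0 //=; have [->|Snp] := eqVneq Sn 0; first by rewrite invr0 mulr0.
  by rewrite ler_pdivrMr ?mul1r // lt_def Snp Sn0.
have rhoS : rho * Sn = Sp.
  by rewrite /rho; have [Sn00|Snp] := eqVneq Sn 0; [rewrite Sn00 mulr0; lra|rewrite mulfVK].
exists (fun i => if g i < 0 then rho * lam i else lam i); split.
- move=> i; have li := l0 i; case/andP: rho01 => r0 r1.
  by case: ifP => _; apply/andP; split; nra.
- by move=> i gi; rewrite ltNge gi.
- transitivity (Sp - rho * Sn); last by rewrite rhoS subrr.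
  rewrite /Sn /Sp mulr_sumr -sumrB.
  by apply: eq_bigr => i _; case: ifP => _; ring.
Qed.

(* Trade the part of the weights that exactly balances the sign of the quadratic for
   point masses at [a] and [b], which by [quadrature_two_point] keeps all quadratic moments. *)
Lemma chord_cut_weights (t lam : I -> R) (a b : I) (c : R) : t a != t b -> c != 0 ->
  (forall i, 0 <= lam i) -> \sum_i lam i * (c * ((t i - t a) * (t i - t b))) <= 0 ->
  exists nu : I -> R, [/\ forall i, 0 <= nu i,
    forall i, i != a -> i != b ->
      nu i <= lam i /\ (0 <= c * ((t i - t a) * (t i - t b)) -> nu i = 0)
  & forall (w : I -> R) c0 c1 c2, (forall i, w i = c0 + c1 * t i + c2 * t i ^+ 2) ->
      \sum_i nu i * w i = \sum_i lam i * w i].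
Proof.
move=> tab cn0 l0 Slg; set g := fun i => c * ((t i - t a) * (t i - t b)).
have [D [D01 Dg SDg]] := sub_weights_orthogonal (g := g) l0 Slg.
have SDq : \sum_i D i * ((t i - t a) * (t i - t b)) = 0.
  apply/eqP; rewrite -(mulrI_eq0 _ (lregP cn0)) mulr_sumr; apply/eqP.
  by rewrite -[RHS]SDg; apply: eq_bigr => i _; rewrite /g; ring.
have [na [nb [na0 nb0 quad]]] :=
  quadrature_two_point tab (fun i => proj1 (andP (D01 i))) SDq.
have ab : a != b by apply: contraNneq tab => ->.
exists (fun i => lam i - D i + (if i == a then na else 0) + (if i == b then nb else 0)).
split=> [i|i /negbTE ia /negbTE ib|w c0 c1 c2 wE].
- have /andP[_ Dl] := D01 i.
  by apply: addr_ge0; [apply: addr_ge0; [rewrite subr_ge0|case: ifP]|case: ifP].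
- have /andP[D0 Dl] := D01 i; rewrite ia ib !addr0; split; first lra.
  by move/Dg ->; rewrite subrr.
rewrite (eq_bigr (fun i => lam i * w i - D i * w i
    + ((if i == a then na else 0) * w i + (if i == b then nb else 0) * w i))); last first.
  by move=> i _; ring.
rewrite big_split sumrB /= big_split /=.
rewrite (sum_supp1 (g := fun i => (if i == a then na else 0) * w i) (u := a)); last first.
  by move=> i /negbTE ->; rewrite !mul0r.
rewrite (sum_supp1 (g := fun i => (if i == b then nb else 0) * w i) (u := b)); last first.
  by move=> i /negbTE ->; rewrite !mul0r.
have -> : \sum_i D i * w i = \sum_i D i * (c0 + c1 * t i + c2 * t i ^+ 2).
  by apply: eq_bigr => i _; rewrite wE.
by rewrite quad !wE !eqxx /=; ring.
Qed.

End Weights.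

Section MomentCurve.
Variables (R : realType) (n : nat) (t : 'I_n -> R).

Lemma sum_poly3 (lam : 'I_n -> R) (c0 c1 c2 c3 : R) :
  \sum_i lam i * (c0 + c1 * t i + c2 * t i ^+ 2 + c3 * t i ^+ 3) =
  c0 * (\sum_i lam i) + c1 * (\sum_i lam i * t i) + c2 * (\sum_i lam i * t i ^+ 2)
  + c3 * (\sum_i lam i * t i ^+ 3).
Proof. by rewrite !mulr_sumr -!big_split /=; apply: eq_bigr => i _; ring. Qed.

Lemma sum_weighted_ge0 (S : {set 'I_n}) (lam f : 'I_n -> R) :
  (forall i, 0 <= lam i) -> (forall i, i \notin S -> lam i = 0) ->
  (forall i, i \in S -> 0 <= f i) -> 0 <= \sum_i lam i * f i.
Proof.
move=> l0 l1 hf; apply: sumr_ge0 => i _.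
by case: (boolP (i \in S)) => iS; [rewrite mulr_ge0 ?hf|rewrite l1 ?mul0r].
Qed.

Lemma sum_weighted_eq0 (S : {set 'I_n}) (lam f : 'I_n -> R) :
  (forall i, 0 <= lam i) -> (forall i, i \notin S -> lam i = 0) ->
  (forall i, i \in S -> 0 <= f i) -> \sum_i lam i * f i = 0 ->
  forall i, lam i * f i = 0.
Proof.
move=> l0 l1 hf h0 i; apply: (psumr_eq0P _ h0) => // j _.
by case: (boolP (j \in S)) => jS; [rewrite mulr_ge0 ?hf|rewrite l1 ?mul0r].
Qed.

Lemma lift_subset (a b : {set 'I_n}) p z : a \subset b -> Defs.lift t a p z -> Defs.lift t b p z.
Proof.
move=> sab [lam [l0 l1 l2 l3 l4]]; exists lam; split => // i ib.
by apply: l1; apply: contra ib; apply: (subsetP sab).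
Qed.

Lemma in_conv_subset (a b : {set 'I_n}) p : a \subset b -> in_conv t a p -> in_conv t b p.
Proof. by move=> sab [z hz]; exists z; apply: lift_subset hz. Qed.

Lemma height_le_cubic (S T : {set 'I_n}) (r1 r2 r3 : R) :
  (forall i, i \in S -> cubic r1 r2 r3 (t i) <= 0) ->
  (forall i, i \in T -> 0 <= cubic r1 r2 r3 (t i)) -> height_le t S T.
Proof.
move=> hS hT p z1 z2 [lam [l0 l1 l2 l3 l4]] [mu [m0 m1 m2 m3 m4]].
have expand (nu : 'I_n -> R) : \sum_i nu i * cubic r1 r2 r3 (t i) =
    - (r1 * r2 * r3) * (\sum_i nu i) + (r1 * r2 + r1 * r3 + r2 * r3) * (\sum_i nu i * t i)
    + (- (r1 + r2 + r3)) * (\sum_i nu i * t i ^+ 2) + 1 * (\sum_i nu i * t i ^+ 3).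
  by rewrite -sum_poly3; apply: eq_bigr => i _; rewrite /cubic; ring.
have hl : 0 <= \sum_i lam i * - cubic r1 r2 r3 (t i).
  by apply: (sum_weighted_ge0 l0 l1) => i /hS; rewrite oppr_ge0.
have hm := sum_weighted_ge0 m0 m1 hT.
move: hl hm; rewrite (eq_bigr _ (fun i _ => mulrN _ _)) sumrN !expand l2 m2 -l4 -m4.
by move: m3; rewrite l3 => -[-> ->]; lra.
Qed.

Lemma lift_pair (u0 u1 : 'I_n) (al : R) : u0 != u1 -> 0 <= al <= 1 ->
  Defs.lift t [set u0; u1]
    ((1 - al) * t u0 + al * t u1, (1 - al) * t u0 ^+ 2 + al * t u1 ^+ 2)
    ((1 - al) * t u0 ^+ 3 + al * t u1 ^+ 3).
Proof.
move=> u01 /andP[al0 al1].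
pose lam i := if i == u0 then 1 - al else if i == u1 then al else 0.
have lamE (g : 'I_n -> R) : \sum_i lam i * g i = (1 - al) * g u0 + al * g u1.
  rewrite (sum_supp2 u01) /lam ?eqxx 1?eq_sym ?(negbTE u01) // => i iu iv.
  by rewrite (negbTE iu) (negbTE iv) mul0r.
exists lam; split; rewrite ?lamE //.
- by move=> i; rewrite /lam; case: ifP => _; [lra|case: ifP].
- by move=> i; rewrite !inE negb_or => /andP[iu iv]; rewrite /lam (negbTE iu) (negbTE iv).
- by rewrite -(eq_bigr _ (fun i _ => mulr1 _)) lamE; ring.
Qed.

Lemma interleaved_lift_lt (a0 a1 b0 b1 : 'I_n) :
  t a0 < t b0 -> t b0 < t a1 -> t a1 < t b1 ->
  exists p za zb, [/\ Defs.lift t [set a0; a1] p za, Defs.lift t [set b0; b1] p zb & za < zb].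
Proof.
set A0 := t a0; set A1 := t a1; set B0 := t b0; set B1 := t b1 => h1 h2 h3.
pose D := A0 + A1 - B0 - B1.
have D0 : D < 0 by rewrite /D; lra.
pose X := (A0 * A1 - B0 * B1) / D.
have XB0 : X - B0 = (B0 - A0) * (A1 - B0) / - D by rewrite /X /D; field; lra.
have A1X : A1 - X = (A1 - B0) * (B1 - A1) / - D by rewrite /X /D; field; lra.
have B0X : B0 < X by rewrite -subr_gt0 XB0 divr_gt0 ?mulr_gt0; lra.
have XA1 : X < A1 by rewrite -subr_gt0 A1X divr_gt0 ?mulr_gt0; lra.
pose al := (X - A0) / (A1 - A0).
pose be := (X - B0) / (B1 - B0).
have al0 : 0 < al by rewrite divr_gt0 //; lra.
have al1 : al <= 1 by rewrite ler_pdivrMr; lra.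
have be01 : 0 <= be <= 1 by rewrite divr_ge0 ?ler_pdivrMr; lra.
have a01 : a0 != a1 by apply/eqP => e; move: h1 h2; rewrite /A0 /A1 e; lra.
have b01 : b0 != b1 by apply/eqP => e; move: h2 h3; rewrite /B0 /B1 e; lra.
exists ((1 - al) * A0 + al * A1, (1 - al) * A0 ^+ 2 + al * A1 ^+ 2).
exists ((1 - al) * A0 ^+ 3 + al * A1 ^+ 3), ((1 - be) * B0 ^+ 3 + be * B1 ^+ 3).
split; first by apply: lift_pair => //; rewrite (ltW al0) al1.
  rewrite [X in Defs.lift _ _ X]
    (_ : _ = ((1 - be) * B0 + be * B1, (1 - be) * B0 ^+ 2 + be * B1 ^+ 2)).
    exact: lift_pair.
  by congr (_, _); rewrite /al /be /X /D; field; lra.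
have -> : (1 - be) * B0 ^+ 3 + be * B1 ^+ 3 =
    (1 - al) * A0 ^+ 3 + al * A1 ^+ 3 + al * (A1 - B0) * (B1 - A1) * (A1 - A0).
  by rewrite /al /be /X /D; field; lra.
by rewrite ltrDl; apply: mulr_gt0; [apply: mulr_gt0; [apply: mulr_gt0|]|]; lra.
Qed.

(* [c (y - (t a + t b) x + t a t b)] vanishes on the line through gamma_2(t a) and gamma_2(t b),
   and the curve point gamma_2(t i) lies on the side where it is negative iff
   [c (t i - t a) (t i - t b) < 0]. *)
Lemma in_conv_cut_chord (W W' : {set 'I_n}) (a b : 'I_n) (c : R) p :
  t a != t b -> c != 0 -> a \in W' -> b \in W' ->
  (forall i, i \in W -> c * ((t i - t a) * (t i - t b)) < 0 -> i \in W') ->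
  c * (p.2 - (t a + t b) * p.1 + t a * t b) <= 0 -> in_conv t W p -> in_conv t W' p.
Proof.
move=> tab cn0 aW' bW' hW hp [_ [lam [l0 l1 l2 l3 _]]].
have Slg : \sum_i lam i * (c * ((t i - t a) * (t i - t b))) =
    c * (p.2 - (t a + t b) * p.1 + t a * t b).
  rewrite (eq_bigr (fun i => lam i * (c * (t a * t b) + (- c * (t a + t b)) * t i + c * t i ^+ 2))).
    by rewrite sum_quadratic l2 l3 /=; ring.
  by move=> i _; ring.
have Slg0 : \sum_i lam i * (c * ((t i - t a) * (t i - t b))) <= 0 by rewrite Slg.
have [nu [nu0 nu_supp nuE]] := chord_cut_weights tab cn0 l0 Slg0.
exists (\sum_i nu i * t i ^+ 3), nu; split=> //.
- move=> i iW'; have ia : i != a by apply: contraNneq iW' => ->.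
  have ib : i != b by apply: contraNneq iW' => ->.
  have [nul nu_g] := nu_supp i ia ib.
  have [gi|gi] := leP 0 (c * ((t i - t a) * (t i - t b))); first exact: nu_g.
  have iW : i \notin W by apply: contra iW' => iW; exact: hW.
  by apply/eqP; rewrite eq_le nu0 andbT -(l1 i iW).
- have /= := nuE (fun=> 1) 1 0 0 (ltac:(move=> i; ring)).
  by rewrite !(eq_bigr _ (fun i _ => mulr1 _)) l2.
- by rewrite l3 (nuE _ 0 1 0) ?(nuE (fun i => t i ^+ 2) 0 0 1) // => i; ring.
Qed.

Hypothesis t_inj : injective t.

Lemma pair_weights_eq (u v : 'I_n) (lam mu : 'I_n -> R) :
  (forall i, i != u -> i != v -> lam i = 0 /\ mu i = 0) ->
  \sum_i lam i = \sum_i mu i -> \sum_i lam i * t i = \sum_i mu i * t i -> lam =1 mu.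
Proof.
move=> supp s0 s1; pose d i := lam i - mu i.
suff d0 i : d i = 0 by move=> i; apply/eqP; rewrite -subr_eq0 -/(d i) d0.
have dsupp j : j != u -> j != v -> d j = 0.
  by move=> ju jv; rewrite /d; have [-> ->] := supp j ju jv; rewrite subrr.
have S0 : \sum_j d j = 0 by rewrite sumrB s0 subrr.
have S1 : \sum_j d j * t j = 0 by rewrite (eq_bigr _ (fun j _ => mulrBl _ _ _)) sumrB s1 subrr.
have [evu|uv] := eqVneq u v.
  subst v; have du : d u = 0 by rewrite -S0 (sum_supp1 (u := u)) // => j ju; apply: dsupp.
  by have [->|iu] := eqVneq i u; last exact: dsupp.
move: S0 S1; rewrite (sum_supp2 (g := d) uv) ?(sum_supp2 (g := fun j => d j * t j) uv) //;
  last by move=> j ju jv; rewrite dsupp ?mul0r.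
move=> S0 S1; have tuv : t u - t v != 0 by rewrite subr_eq0 (inj_eq t_inj).
have dv : d v = - d u by apply/eqP; rewrite -subr_eq0 opprK addrC S0.
have : d u * (t u - t v) = 0 by rewrite -S1 dv; ring.
move/eqP; rewrite mulf_eq0 (negbTE tuv) orbF => /eqP du.
have [->|iu] := eqVneq i u => //; have [->|iv] := eqVneq i v; last exact: dsupp.
by move: S0; rewrite du add0r.
Qed.

(* The averages of the quadratic against the weights of p in conv r and in conv s coincide,
   so both vanish and all weights sit on the zeros u and v. *)
Lemma in_conv_setI_quadratic (r s : {set 'I_n}) (c0 c1 c2 : R) (u v : 'I_n) p :
  (forall i, i \in r -> 0 <= c0 + c1 * t i + c2 * t i ^+ 2) ->
  (forall i, i \in s -> c0 + c1 * t i + c2 * t i ^+ 2 <= 0) ->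
  (forall i, c0 + c1 * t i + c2 * t i ^+ 2 = 0 -> i = u \/ i = v) ->
  in_conv t r p -> in_conv t s p -> in_conv t (r :&: s) p.
Proof.
move=> hr hs hz [z [lam [l0 l1 l2 l3 l4]]] [_ [mu [m0 m1 m2 m3 _]]].
pose q i := c0 + c1 * t i + c2 * t i ^+ 2.
have hs' i : i \in s -> 0 <= - q i by move/hs; rewrite oppr_ge0.
have Slq : \sum_i lam i * q i = \sum_i mu i * q i.
  by rewrite !sum_quadratic l2 m2; move: m3; rewrite l3 => -[-> ->].
have SmqN : \sum_i mu i * - q i = - \sum_i lam i * q i.
  by rewrite (eq_bigr _ (fun i _ => mulrN _ _)) sumrN Slq.
have Slq0 : \sum_i lam i * q i = 0.
  have := sum_weighted_ge0 l0 l1 hr; have := sum_weighted_ge0 m0 m1 hs'; rewrite SmqN; lra.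
have lq0 := sum_weighted_eq0 l0 l1 hr Slq0.
have Smq0 : \sum_i mu i * - q i = 0 by rewrite SmqN Slq0 oppr0.
have mq0 := sum_weighted_eq0 m0 m1 hs' Smq0.
have supp i : i != u -> i != v -> lam i = 0 /\ mu i = 0.
  move=> iu iv; have qi : q i != 0.
    by apply/eqP => /hz [] /eqP; rewrite ?(negbTE iu) ?(negbTE iv).
  have /eqP := lq0 i; have /eqP := mq0 i.
  by rewrite mulrN oppr_eq0 !mulf_eq0 (negbTE qi) !orbF => /eqP -> /eqP ->.
have lam_mu := pair_weights_eq supp (etrans l2 (esym m2)).
have {}lam_mu : lam =1 mu by apply: lam_mu; move: m3; rewrite l3 => -[].
exists z, lam; split=> // i; rewrite inE negb_and => /orP[ir|iS]; first exact: l1.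
by rewrite lam_mu m1.
Qed.

End MomentCurve.

(** * A triangulation avoiding the forbidden interleavings *)

Definition interleave (u0 u1 v0 v1 : nat) := [/\ u0 < v0, v0 < u1 & u1 < v1]%N.

Section ChordTriangulation.
Variables (m : nat) (A B : {set {set 'I_m.+1}}).

(* An A-edge interleaved with the chord x y as x < a0 < y < a1 would pass above the chord,
   a B-edge interleaved as b0 < x < b1 < y below it. *)
Definition admissible (x y : nat) :=
  (forall a0 a1 : 'I_m.+1, [set a0; a1] \in A -> ~ interleave x y a0 a1) /\
  (forall b0 b1 : 'I_m.+1, [set b0; b1] \in B -> ~ interleave b0 b1 x y).

Definition covered (lo hi k : nat) := [exists b0 : 'I_m.+1, exists b1 : 'I_m.+1,
  ([set b0; b1] \in B) && [&& lo <= b0, b0 < k, k < b1 & b1 < hi]%N].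

Definition apex (lo hi : nat) :=
  nth hi.-1 (iota lo.+1 (hi - lo.+1))
    (find (fun k => ~~ covered lo hi k) (iota lo.+1 (hi - lo.+1))).

Lemma apexP lo hi : (lo.+1 < hi)%N ->
  [/\ (lo < apex lo hi < hi)%N, ~~ covered lo hi (apex lo hi)
    & forall j, (lo < j < apex lo hi)%N -> covered lo hi j].
Proof.
move=> h; rewrite /apex; set P := fun k => ~~ covered lo hi k.
have hP : has P (iota lo.+1 (hi - lo.+1)).
  apply/hasP; exists hi.-1; first by rewrite mem_iota; lia.
  by rewrite /P; apply/negP => /existsP[b0 /existsP[b1 /andP[_ /and4P[_ _ ? ?]]]]; lia.
have := nth_find hi.-1 hP; have := hP; rewrite has_find size_iota => fs.
rewrite nth_iota // => Pk; split=> //; first by apply/andP; lia.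
move=> j /andP[j1 j2]; have jf : (j - lo.+1 < find P (iota lo.+1 (hi - lo.+1)))%N by lia.
by have := before_find hi.-1 jf; rewrite nth_iota ?subnKC //; [move/negbFE|lia].
Qed.

Hypothesis AB_no_interleave : forall a0 a1 b0 b1 : 'I_m.+1,
  [set a0; a1] \in A -> [set b0; b1] \in B -> ~ interleave b0 b1 a0 a1.

Lemma admissible_apex lo hi : (lo.+1 < hi)%N -> admissible lo hi ->
  admissible lo (apex lo hi) /\ admissible (apex lo hi) hi.
Proof.
move=> h [gA gB]; have [/andP[k1 k2] kc kmin] := apexP h; set k := apex lo hi in k1 k2 kc kmin *.
split; split=> u0 u1 uE [h1 h2 h3].
- have u1hi : (u1 <= hi)%N by rewrite leqNgt; apply/negP => ?; apply: (gA u0 u1 uE); split; lia.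
  have /existsP[b0 /existsP[b1 /andP[bB /and4P[c1 c2 c3 c4]]]] := kmin u0 (ltac:(lia)).
  have b1k : (b1 <= k)%N.
    rewrite leqNgt; apply/negP => ?; move/negP: kc; apply; apply/existsP; exists b0.
    by apply/existsP; exists b1; rewrite bB; apply/and4P; split; lia.
  by apply: (AB_no_interleave uE bB); split; lia.
- by apply: (gB u0 u1 uE); split; lia.
- by apply: (gA u0 u1 uE); split; lia.
- have lou0 : (lo <= u0)%N by rewrite leqNgt; apply/negP => ?; apply: (gB u0 u1 uE); split; lia.
  move/negP: kc; apply; apply/existsP; exists u0; apply/existsP; exists u1.
  by rewrite uE; apply/and4P; split; lia.
Qed.

Definition triangle (x y z : nat) : {set 'I_m.+1} := [set inord x; inord y; inord z].

(* [f] is fuel: [triangulate f lo hi] triangulates the polygon lo, ..., hi once hi - lo <= f. *)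
Fixpoint triangulate (f lo hi : nat) : {set {set 'I_m.+1}} :=
  if f is f'.+1 then
    if (lo.+1 < hi)%N then
      triangle lo (apex lo hi) hi
        |: (triangulate f' lo (apex lo hi) :|: triangulate f' (apex lo hi) hi)
    else set0
  else set0.

Lemma triangulate_cells f lo hi r : (hi - lo <= f)%N -> admissible lo hi ->
  r \in triangulate f lo hi ->
  exists x y z, [/\ (lo <= x < y)%N, (y < z <= hi)%N, r = triangle x y z
    & [/\ admissible x y, admissible y z & admissible x z]].
Proof.
elim: f lo hi => [|f IH] lo hi /= hf g; first by rewrite inE.
case: ifP => h; last by rewrite inE.
have [/andP[k1 k2] _ _] := apexP h; have [g1 g2] := admissible_apex h g.
rewrite !inE => /orP[/eqP ->|/orP[rr|rr]].
- by exists lo, (apex lo hi), hi; split=> //; apply/andP; split.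
- have [x [y [z [? ? ? ?]]]] := IH lo (apex lo hi) (ltac:(lia)) g1 rr.
  by exists x, y, z; split=> //; apply/andP; lia.
- have [x [y [z [? ? ? ?]]]] := IH (apex lo hi) hi (ltac:(lia)) g2 rr.
  by exists x, y, z; split=> //; apply/andP; lia.
Qed.

Lemma triangle_apex_in f lo hi : (0 < f)%N -> (lo.+1 < hi)%N ->
  triangle lo (apex lo hi) hi \in triangulate f lo hi.
Proof. by case: f => //= f _ ->; rewrite !inE eqxx. Qed.

Lemma mem_triangle x y z (i : 'I_m.+1) : (x <= m)%N -> (y <= m)%N -> (z <= m)%N ->
  (i \in triangle x y z) = [|| i == x :> nat, i == y :> nat | i == z :> nat].
Proof. by move=> *; rewrite !inE -!val_eqE /= !inordK ?orbA. Qed.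

Definition vertex_range (lo hi : nat) : {set 'I_m.+1} := [set i : 'I_m.+1 | lo <= i <= hi]%N.

Lemma card_triangle x y z : (x < y < z)%N -> (z <= m)%N -> #|triangle x y z| = 3%N.
Proof.
move=> xyz zm; rewrite /triangle -setUA cardsU1 cards2 !inE -!val_eqE /= !inordK; lia.
Qed.

Lemma admissible_full : admissible 0 m.
Proof. by split=> u0 u1 _ [? ? ?]; [have := ltn_ord u1|]; lia. Qed.

End ChordTriangulation.

Lemma edge_pair n (e : {set 'I_n}) :
  is_edge e -> exists a0 a1 : 'I_n, (a0 < a1)%N /\ e = [set a0; a1].
Proof.
move=> /eqP /cards2P [x [y [xy ->]]]; case: (ltngtP x y) => h.
- by exists x, y.
- by exists y, x; rewrite setUC.
- by move: xy; rewrite -val_eqE /= h eqxx.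
Qed.

(** * Geometry of the triangulation *)

Section TriangulationGeometry.
Variables (R : realType) (m : nat) (t : 'I_m.+1 -> R).
Hypothesis t_mono : forall i j : 'I_m.+1, (i < j)%N -> t i < t j.

Lemma t_lt (i j : 'I_m.+1) : (t i < t j) = (i < j)%N.
Proof.
by case: (ltngtP i j) => [/t_mono ->|/t_mono /lt_gtF ->|/val_inj ->] //; rewrite ltxx.
Qed.

Lemma t_le (i j : 'I_m.+1) : (t i <= t j) = (i <= j)%N.
Proof. by rewrite leNgt t_lt -leqNgt. Qed.

Lemma t_inj : injective t.
Proof. by move=> i j e; apply/val_inj/eqP; rewrite eqn_leq -!t_le e lexx. Qed.

Lemma in_conv_cut_inner (W W' : {set 'I_m.+1}) (u v : 'I_m.+1) p : (u < v)%N ->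
  u \in W' -> v \in W' -> (forall i, i \in W -> (u < i < v)%N -> i \in W') ->
  p.2 - (t u + t v) * p.1 + t u * t v <= 0 -> in_conv t W p -> in_conv t W' p.
Proof.
move=> uv uW vW hW hp; apply: (in_conv_cut_chord _ (oner_neq0 R) uW vW).
- by rewrite neq_lt t_lt uv.
- by move=> i iW; rewrite mul1r => /subr_mul_subr_lt0; rewrite !t_lt => /(_ uv); exact: hW.
- by rewrite mul1r.
Qed.

Lemma in_conv_cut_outer (W W' : {set 'I_m.+1}) (u v : 'I_m.+1) p : (u < v)%N ->
  u \in W' -> v \in W' -> (forall i, i \in W -> (i < u)%N || (v < i)%N -> i \in W') ->
  0 <= p.2 - (t u + t v) * p.1 + t u * t v -> in_conv t W p -> in_conv t W' p.
Proof.
move=> uv uW vW hW hp; apply: (in_conv_cut_chord (c := -1) _ _ uW vW).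
- by rewrite neq_lt t_lt uv.
- by rewrite oppr_eq0 oner_eq0.
- move=> i iW; rewrite mulN1r oppr_lt0 => /subr_mul_subr_gt0; rewrite !t_lt => /(_ uv) h.
  by apply: hW => //; apply/orP.
- by rewrite mulN1r oppr_le0.
Qed.

Lemma in_conv_split (a k b : 'I_m.+1) p : (a < k < b)%N ->
  in_conv t (vertex_range m a b) p ->
  [\/ in_conv t (vertex_range m a k) p, in_conv t (vertex_range m k b) p
    | in_conv t [set a; k; b] p].
Proof.
move=> akb hp; have /andP[ak kb] := akb.
have [hF|hF] := lerP (p.2 - (t a + t k) * p.1 + t a * t k) 0.
  apply: Or31; apply: in_conv_cut_inner ak _ _ _ hF hp; rewrite ?inE; try lia.
  by move=> i; rewrite !inE; lia.
pose W1 := [set i : 'I_m.+1 | (i == a :> nat) || (k <= i <= b)%N].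
have hp1 : in_conv t W1 p.
  apply: in_conv_cut_outer ak _ _ _ (ltW hF) hp; rewrite ?inE ?eqxx //; try lia.
  by move=> i; rewrite !inE; lia.
have [hG|hG] := lerP (p.2 - (t k + t b) * p.1 + t k * t b) 0.
  apply: Or32; apply: in_conv_cut_inner kb _ _ _ hG hp1; rewrite ?inE; try lia.
  by move=> i; rewrite !inE; lia.
apply: Or33; apply: in_conv_cut_outer kb _ _ _ (ltW hG) hp1; rewrite ?inE ?eqxx ?orbT //.
by move=> i; rewrite !inE -!val_eqE /=; lia.
Qed.

Lemma in_conv_setI_chord (r s : {set 'I_m.+1}) (u v : 'I_m.+1) p : (u < v)%N ->
  (forall i, i \in r -> (i <= u)%N || (v <= i)%N) -> (forall i, i \in s -> (u <= i <= v)%N) ->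
  in_conv t r p -> in_conv t s p -> in_conv t (r :&: s) p.
Proof.
rewrite -t_lt => uv hr hs.
apply: (in_conv_setI_quadratic t_inj (c0 := t u * t v) (c1 := - (t u + t v)) (c2 := 1)
  (u := u) (v := v)).
- move=> i /hr; rewrite -!t_le => hi.
  have -> : t u * t v + - (t u + t v) * t i + 1 * t i ^+ 2 = (t i - t u) * (t i - t v) by ring.
  by case/orP: hi => ?; prod_sign.
- move=> i /hs /andP[]; rewrite -!t_le => ? ?.
  have -> : t u * t v + - (t u + t v) * t i + 1 * t i ^+ 2 = (t i - t u) * (t i - t v) by ring.
  prod_sign.
- move=> i h; have /eqP : (t i - t u) * (t i - t v) = 0 by rewrite -h; ring.
  by rewrite mulf_eq0 !subr_eq0 => /orP[] /eqP /t_inj ->; [left|right].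
Qed.

Lemma in_conv_setI_vertex (r s : {set 'I_m.+1}) (u : 'I_m.+1) p :
  (forall i, i \in r -> (i <= u)%N) -> (forall i, i \in s -> (u <= i)%N) ->
  in_conv t r p -> in_conv t s p -> in_conv t (r :&: s) p.
Proof.
move=> hr hs.
apply: (in_conv_setI_quadratic t_inj (c0 := t u) (c1 := -1) (c2 := 0) (u := u) (v := u)).
- by move=> i /hr; rewrite -t_le => ?; lra.
- by move=> i /hs; rewrite -t_le => ?; lra.
- by move=> i h; left; apply: t_inj; lra.
Qed.

Variables (A B : {set {set 'I_m.+1}}).
Hypothesis AB_no_interleave : forall a0 a1 b0 b1 : 'I_m.+1,
  [set a0; a1] \in A -> [set b0; b1] \in B -> ~ interleave b0 b1 a0 a1.

Lemma triangulate_vertices f lo hi r i : (hi <= m)%N ->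
  r \in triangulate B f lo hi -> i \in r -> (lo <= i <= hi)%N.
Proof.
elim: f lo hi r => [|f IH] lo hi r hm /=; first by rewrite inE.
case: ifP => h; last by rewrite inE.
have [/andP[k1 k2] _ _] := apexP B h; set k := apex B lo hi in k1 k2 *.
rewrite !inE => /orP[/eqP ->|/orP[rL|rR]] ir.
- by move: ir; rewrite mem_triangle; lia.
- by have := IH lo k r (ltac:(lia)) rL ir; lia.
- by have := IH k hi r hm rR ir; lia.
Qed.

Lemma triangulate_cover f lo hi p : (hi - lo <= f)%N -> (lo < hi <= m)%N ->
  in_conv t (vertex_range m lo hi) p ->
  (exists2 r, r \in triangulate B f lo hi & in_conv t r p) \/
  in_conv t [set inord lo; inord hi] p.
Proof.
elim: f lo hi => [|f IH] lo hi hf lhm hp /=; first lia.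
case: ifP => h; last first.
  right; apply: in_conv_subset hp; apply/subsetP => i.
  by rewrite !inE -!val_eqE /= !inordK; lia.
have [/andP[k1 k2] _ _] := apexP B h; set k := apex B lo hi in k1 k2 *.
have vlo : (inord lo : 'I_m.+1) = lo :> nat by rewrite inordK; lia.
have vk : (inord k : 'I_m.+1) = k :> nat by rewrite inordK; lia.
have vhi : (inord hi : 'I_m.+1) = hi :> nat by rewrite inordK; lia.
set T := _ |: _; have topT : triangle m lo k hi \in T by rewrite !inE eqxx.
have in_top (S : {set 'I_m.+1}) : S \subset triangle m lo k hi -> in_conv t S p ->
    (exists2 r, r \in T & in_conv t r p) \/ in_conv t [set inord lo; inord hi] p.
  by move=> sS hS; left; exists (triangle m lo k hi) => //; apply: in_conv_subset hS.
have [||hL|hR|hT] := in_conv_split (a := inord lo) (k := inord k) (b := inord hi) (p := p).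
- by rewrite vlo vk vhi k1.
- by rewrite vlo vhi.
- rewrite vlo vk in hL; have [[r rL hr]|hS] := IH lo k (ltac:(lia)) (ltac:(lia)) hL.
    by left; exists r => //; rewrite !inE rL orbT.
  by apply: in_top hS; apply/subsetP => i; rewrite !inE => /orP[] ->; rewrite ?orbT.
- rewrite vk vhi in hR; have [[r rR hr]|hS] := IH k hi (ltac:(lia)) (ltac:(lia)) hR.
    by left; exists r => //; rewrite !inE rR !orbT.
  by apply: in_top hS; apply/subsetP => i; rewrite !inE => /orP[] ->; rewrite ?orbT.
- by left; exists (triangle m lo k hi).
Qed.

Lemma triangulate_inter f lo hi r s p : (hi <= m)%N ->
  r \in triangulate B f lo hi -> s \in triangulate B f lo hi ->
  in_conv t r p -> in_conv t s p -> in_conv t (r :&: s) p.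
Proof.
elim: f lo hi r s => [|f IH] lo hi r s hm /=; first by rewrite inE.
case: ifP => h; last by rewrite inE.
have [/andP[k1 k2] _ _] := apexP B h; set k := apex B lo hi in k1 k2 *.
have vlo : (inord lo : 'I_m.+1) = lo :> nat by rewrite inordK; lia.
have vk : (inord k : 'I_m.+1) = k :> nat by rewrite inordK; lia.
have vhi : (inord hi : 'I_m.+1) = hi :> nat by rewrite inordK; lia.
have top i : i \in triangle m lo k hi -> [|| i == lo :> nat, i == k :> nat | i == hi :> nat].
  by rewrite mem_triangle //; lia.
have inL c i : c \in triangulate B f lo k -> i \in c -> (lo <= i <= k)%N.
  by move=> cL; apply: triangulate_vertices cL; lia.
have inR c i : c \in triangulate B f k hi -> i \in c -> (k <= i <= hi)%N.
  by move=> cR; apply: triangulate_vertices cR.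
have TL c : c \in triangulate B f lo k -> in_conv t (triangle m lo k hi) p -> in_conv t c p ->
    in_conv t (triangle m lo k hi :&: c) p.
  move=> cL; apply: (in_conv_setI_chord (u := inord lo) (v := inord k)).
  - by rewrite vlo vk.
  - by move=> i /top; rewrite vlo vk; lia.
  - by move=> i /(inL _ _ cL); rewrite vlo vk.
have TR c : c \in triangulate B f k hi -> in_conv t (triangle m lo k hi) p -> in_conv t c p ->
    in_conv t (triangle m lo k hi :&: c) p.
  move=> cR; apply: (in_conv_setI_chord (u := inord k) (v := inord hi)).
  - by rewrite vk vhi.
  - by move=> i /top; rewrite vk vhi; lia.
  - by move=> i /(inR _ _ cR); rewrite vk vhi.
have LR c d : c \in triangulate B f lo k -> d \in triangulate B f k hi ->
    in_conv t c p -> in_conv t d p -> in_conv t (c :&: d) p.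
  move=> cL dR; apply: (in_conv_setI_vertex (u := inord k)); rewrite vk.
  - by move=> i /(inL _ _ cL) /andP[].
  - by move=> i /(inR _ _ dR) /andP[].
rewrite !inE => /orP[/eqP->|/orP[rL|rR]] /orP[/eqP->|/orP[sL|sR]] hr hs.
- by rewrite setIid.
- exact: TL.
- exact: TR.
- by rewrite setIC; apply: TL.
- exact: (IH lo k r s (ltac:(lia)) rL sL).
- exact: LR.
- by rewrite setIC; apply: TR.
- by rewrite setIC; apply: LR.
- exact: (IH k hi r s hm rR sR).
Qed.

Lemma triangulate_edge f lo hi (e0 e1 : 'I_m.+1) : (hi - lo <= f)%N -> (lo < hi <= m)%N ->
  admissible A B lo hi -> [set e0; e1] \in A -> [set e0; e1] \in B ->
  (lo <= e0)%N -> (e0 < e1)%N -> (e1 <= hi)%N ->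
  (e0 == lo :> nat) && (e1 == hi :> nat) \/
  exists2 r, r \in triangulate B f lo hi & [set e0; e1] \subset r.
Proof.
move=> + + + eA eB; elim: f lo hi => [|f IH] lo hi hf lhm g l0 l1 l2 /=; first lia.
case: ifP => h; last by left; apply/andP; lia.
have [/andP[k1 k2] _ _] := apexP B h; have [g1 g2] := admissible_apex AB_no_interleave h g.
set k := apex B lo hi in k1 k2 g1 g2 *.
have in_top x y : [|| x == lo, x == k | x == hi] -> [|| y == lo, y == k | y == hi] ->
    (x == e0 :> nat) -> (y == e1 :> nat) -> [set e0; e1] \subset triangle m lo k hi.
  move=> hx hy /eqP ex /eqP ey; apply/subsetP => i; rewrite mem_triangle; try lia.
  by rewrite !inE -!val_eqE /= => /orP[] /eqP ->; lia.
have [|ne] := boolP ((e0 == lo :> nat) && (e1 == hi :> nat)); first by left.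
right; have [e1k|ke1] := leqP e1 k.
  have [/andP[/eqP ? /eqP ?]|[r rL er]] := IH lo k (ltac:(lia)) (ltac:(lia)) g1 l0 l1 e1k.
    by exists (triangle m lo k hi); rewrite ?inE ?eqxx //; apply: (in_top e0 e1); lia.
  by exists r => //; rewrite !inE rL orbT.
have [ke0|e0k] := leqP k e0.
  have [/andP[/eqP ? /eqP ?]|[r rR er]] := IH k hi (ltac:(lia)) (ltac:(lia)) g2 ke0 l1 l2.
    by exists (triangle m lo k hi); rewrite ?inE ?eqxx //; apply: (in_top e0 e1); lia.
  by exists r => //; rewrite !inE rR !orbT.
exfalso; have [loe0|e0lo] := ltnP lo e0.
  by apply: (proj1 g1 _ _ eA); split.
by apply: (proj2 g2 _ _ eB); split=> //; lia.
Qed.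

Lemma admissible_edge_below (x y : nat) (a0 a1 : 'I_m.+1) :
  admissible A B x y -> [set a0; a1] \in A -> (x <= m)%N -> (y <= m)%N ->
  ~ (t (inord x) < t a0 /\ t a0 < t (inord y) /\ t (inord y) < t a1).
Proof.
move=> [gA _] aA xm ym; rewrite !t_lt !inordK // => -[? [? ?]].
by apply: (gA _ _ aA); split.
Qed.

Lemma admissible_edge_above (x y : nat) (b0 b1 : 'I_m.+1) :
  admissible A B x y -> [set b0; b1] \in B -> (x <= m)%N -> (y <= m)%N ->
  ~ (t b0 < t (inord x) /\ t (inord x) < t b1 /\ t b1 < t (inord y)).
Proof.
move=> [_ gB] bB xm ym; rewrite !t_lt !inordK // => -[? [? ?]].
by apply: (gB _ _ bB); split.
Qed.

Lemma height_le_edge_triangle (x y z : nat) (a0 a1 : 'I_m.+1) : (x < y < z)%N -> (z <= m)%N ->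
  [/\ admissible A B x y, admissible A B y z & admissible A B x z] ->
  [set a0; a1] \in A -> (a0 < a1)%N -> height_le t [set a0; a1] (triangle m x y z).
Proof.
move=> xyz zm [gxy gyz gxz] aA a01.
have xm : (x <= m)%N by lia. have ym : (y <= m)%N by lia.
have vx : (inord x : 'I_m.+1) = x :> nat by rewrite inordK.
have vy : (inord y : 'I_m.+1) = y :> nat by rewrite inordK.
have vz : (inord z : 'I_m.+1) = z :> nat by rewrite inordK.
have txy : t (inord x) < t (inord y) by rewrite t_lt vx vy; lia.
have tyz : t (inord y) < t (inord z) by rewrite t_lt vy vz; lia.
have [r1 [r2 [r3 [ha hb hx hy hz]]]] :=
  @exists_cubic_sep_edge_triangle _ (t a0) (t a1) (t (inord x)) (t (inord y)) (t (inord z))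
  (ltac:(by rewrite t_lt)) txy tyz (admissible_edge_below gxy aA xm ym)
  (admissible_edge_below gyz aA ym zm) (admissible_edge_below gxz aA xm zm).
apply: (height_le_cubic (r1 := r1) (r2 := r2) (r3 := r3)) => i; rewrite !inE.
  by case/orP => /eqP ->.
by case/orP => [/orP[]|] /eqP ->.
Qed.

Lemma height_le_triangle_edge (x y z : nat) (b0 b1 : 'I_m.+1) : (x < y < z)%N -> (z <= m)%N ->
  [/\ admissible A B x y, admissible A B y z & admissible A B x z] ->
  [set b0; b1] \in B -> (b0 < b1)%N -> height_le t (triangle m x y z) [set b0; b1].
Proof.
move=> xyz zm [gxy gyz gxz] bB b01.
have xm : (x <= m)%N by lia. have ym : (y <= m)%N by lia.
have vx : (inord x : 'I_m.+1) = x :> nat by rewrite inordK.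
have vy : (inord y : 'I_m.+1) = y :> nat by rewrite inordK.
have vz : (inord z : 'I_m.+1) = z :> nat by rewrite inordK.
have txy : t (inord x) < t (inord y) by rewrite t_lt vx vy; lia.
have tyz : t (inord y) < t (inord z) by rewrite t_lt vy vz; lia.
have [r1 [r2 [r3 [ha hb hx hy hz]]]] :=
  @exists_cubic_sep_triangle_edge _ (t b0) (t b1) (t (inord x)) (t (inord y)) (t (inord z))
  (ltac:(by rewrite t_lt)) txy tyz (admissible_edge_above gxy bB xm ym)
  (admissible_edge_above gyz bB ym zm) (admissible_edge_above gxz bB xm zm).
apply: (height_le_cubic (r1 := r1) (r2 := r2) (r3 := r3)) => i; rewrite !inE.
  by case/orP => [/orP[]|] /eqP ->.
by case/orP => /eqP ->.
Qed.

Hypothesis m_ge2 : (2 <= m)%N.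

Let T := triangulate B m 0 m.

Lemma triangulation_cell r : r \in T -> exists x y z, [/\ (x < y < z)%N, (z <= m)%N,
  r = triangle m x y z & [/\ admissible A B x y, admissible A B y z & admissible A B x z]].
Proof.
move=> rT; have [x [y [z [/andP[_ xy] /andP[yz zm] -> g]]]] :=
  triangulate_cells AB_no_interleave (leq_subr 0 m) (admissible_full A B) rT.
by exists x, y, z; split=> //; apply/andP.
Qed.

Lemma top_triangle : triangle m 0 (apex B 0 m) m \in T.
Proof. by apply: triangle_apex_in; lia. Qed.

Lemma triangulation_triangulate : triangulation t T.
Proof.
split.
- by move=> r /triangulation_cell [x [y [z [xyz zm -> _]]]]; exact: card_triangle.
- move=> p; split=> [hp|[r _ hr]]; last by apply: in_conv_subset hr; apply: subsetT.
  have hp' : in_conv t (vertex_range m 0 m) p.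
    by apply: in_conv_subset hp; apply/subsetP => i _; rewrite inE; have := ltn_ord i; lia.
  have [[r rT hr]|hr] := triangulate_cover (leq_subr 0 m) (ltac:(lia)) hp'.
    by exists r.
  exists (triangle m 0 (apex B 0 m) m); first exact: top_triangle.
  by apply: in_conv_subset hr; apply/subsetP => i; rewrite !inE => /orP[] ->; rewrite ?orbT.
- move=> r s rT sT p; split=> [[hr hs]|h].
    exact: (triangulate_inter (leqnn m) rT sT hr hs).
  by split; apply: in_conv_subset h; [apply: subsetIl|apply: subsetIr].
Qed.

Lemma triangulate_edge_le e : e \in A -> is_edge e -> edge_le_T t e T.
Proof.
move=> eA /edge_pair [a0 [a1 [a01 ee]]] r /triangulation_cell [x [y [z [xyz zm -> g]]]].
by rewrite ee; apply: (height_le_edge_triangle xyz zm g) => //; rewrite -ee.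
Qed.

Lemma triangulate_le_edge e : e \in B -> is_edge e -> T_le_edge t T e.
Proof.
move=> eB /edge_pair [b0 [b1 [b01 ee]]] r /triangulation_cell [x [y [z [xyz zm -> g]]]].
by rewrite ee; apply: (height_le_triangle_edge xyz zm g) => //; rewrite -ee.
Qed.

Lemma triangulate_edge_in e : e \in A -> e \in B -> is_edge e -> edge_in_T e T.
Proof.
move=> eA eB /edge_pair [e0 [e1 [e01 ee]]]; rewrite ee in eA eB *.
have [/andP[/eqP e00 /eqP e1m]|[r rT er]] :=
  triangulate_edge (leq_subr 0 m) (ltac:(lia)) (admissible_full A B) eA eB
    (leq0n _) e01 (ltn_ord e1); last by exists r.
have [/andP[_ km] _ _] := apexP B m_ge2.
exists (triangle m 0 (apex B 0 m) m); first exact: top_triangle.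
by apply/subsetP => i; rewrite mem_triangle ?inE -?val_eqE /=; lia.
Qed.

End TriangulationGeometry.

(** * The ordering hypothesis forbids the interleavings *)

Lemma interleave_cross_above (R : realType) n (t : 'I_n -> R) :
  (forall i j : 'I_n, (i < j)%N -> t i < t j) ->
  forall a0 a1 b0 b1 : 'I_n, interleave b0 b1 a0 a1 ->
  cross t [set a0; a1] [set b0; b1] /\ ~ height_le t [set a0; a1] [set b0; b1].
Proof.
move=> t_mono a0 a1 b0 b1 [h1 h2 h3].
have [p [zb [za [Lb La zba]]]] :=
  interleaved_lift_lt (t_mono _ _ h1) (t_mono _ _ h2) (t_mono _ _ h3).
split; last by move/(_ p za zb La Lb); lra.
exists p; split; [by exists za|by exists zb|].
by case=> i [/setIP[]]; rewrite !inE => /orP[] /eqP -> /orP[] /eqP /(congr1 val) /=; lia.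
Qed.

Lemma nth_ordered (T : eqType) (x0 : T) (s : seq T) (x y : T) :
  x \in s -> y \in s -> x != y -> exists i j, (i < j < size s)%N /\
    (nth x0 s i = x /\ nth x0 s j = y \/ nth x0 s i = y /\ nth x0 s j = x).
Proof.
move=> xs ys xy; have := index_mem x s; have := index_mem y s; rewrite xs ys => iy ix.
case: (ltngtP (index x s) (index y s)) => h.
- by exists (index x s), (index y s); rewrite !nth_index // h iy; split=> //; left.
- by exists (index y s), (index x s); rewrite !nth_index // h ix; split=> //; right.
- by move: xy; rewrite -(nth_index x0 xs) h nth_index ?eqxx.
Qed.

Lemma no_interleave_of_order (R : realType) n (t : 'I_n -> R) (E1 E2 E3 : {set {set 'I_n}})
    (s : seq {set 'I_n}) :
  (forall i j : 'I_n, (i < j)%N -> t i < t j) ->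
  s =i E1 :|: E2 :|: E3 ->
  (forall i j, (i < j < size s)%N ->
     ~ (nth set0 s j \in E1 /\ nth set0 s i \in E2 :|: E3) /\
     ~ (nth set0 s j \in E2 /\ nth set0 s i \in E3)) ->
  (forall i j, (i < j < size s)%N ->
     lt3 t (nth set0 s i) (nth set0 s j) \/ ~ cross t (nth set0 s i) (nth set0 s j)) ->
  (forall e f, e \in E2 -> f \in E2 -> e != f -> ~ cross t e f) ->
  forall a0 a1 b0 b1 : 'I_n, [set a0; a1] \in E1 :|: E2 -> [set b0; b1] \in E2 :|: E3 ->
  ~ interleave b0 b1 a0 a1.
Proof.
move=> t_mono sE blocks lt3_or_free E2_free a0 a1 b0 b1 aA bB hab.
have [crab nle] := interleave_cross_above t_mono hab.
set a := [set a0; a1] in aA crab nle *; set b := [set b0; b1] in bB crab nle *.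
have ab : a != b.
  apply/negP => /eqP eab; have : a0 \in b by rewrite -eab set21.
  by rewrite !inE -!val_eqE /=; case: hab => *; lia.
have as_ : a \in s by rewrite sE !inE; case/setUP: aA => ->; rewrite ?orbT.
have bs : b \in s by rewrite sE !inE; case/setUP: bB => ->; rewrite ?orbT.
have [i [j [ij [[ei ej]|[ei ej]]]]] := nth_ordered set0 as_ bs ab.
  by rewrite -ei -ej in crab nle; case: (lt3_or_free i j ij) => [[_ /nle]|/(_ crab)].
have [n1 n2] := blocks i j ij; rewrite ei ej in n1 n2.
case/setUP: aA => [aE1|aE2]; first by apply: n1.
by case/setUP: bB => [bE2|bE3]; [exact: E2_free aE2 bE2 ab crab|apply: n2].
Qed.

Theorem corollary3p5 (R : realType) (n : nat) (t : 'I_n -> R)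
    (E1 E2 E3 : {set {set 'I_n}}) :
  (3 <= n)%N ->
  (forall i j : 'I_n, (i < j)%N -> t i < t j) ->
  (forall e, e \in E1 :|: E2 :|: E3 -> is_edge e) ->
  [disjoint E1 & E2] -> [disjoint E1 & E3] -> [disjoint E2 & E3] ->
  (exists s : seq {set 'I_n},
     [/\ uniq s, s =i E1 :|: E2 :|: E3,
         (forall i j, (i < j < size s)%N ->
            ~ (nth set0 s j \in E1 /\ nth set0 s i \in E2 :|: E3) /\
            ~ (nth set0 s j \in E2 /\ nth set0 s i \in E3))
       & (forall i j, (i < j < size s)%N ->
            lt3 t (nth set0 s i) (nth set0 s j) \/
            ~ cross t (nth set0 s i) (nth set0 s j))]) ->
  (forall e f, e \in E2 -> f \in E2 -> e != f -> ~ cross t e f) ->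
  exists T : {set {set 'I_n}},
    [/\ triangulation t T,
        (forall e, e \in E1 -> edge_le_T t e T),
        (forall e, e \in E2 -> edge_in_T e T)
      & (forall e, e \in E3 -> T_le_edge t T e)].
Proof.
case: n t E1 E2 E3 => [|m] // t E1 E2 E3 m2 t_mono edges _ _ _ [s [_ sE blocks lt3_or_free]]
  E2_free.
have no_il := no_interleave_of_order t_mono sE blocks lt3_or_free E2_free.
exists (triangulate (E2 :|: E3) m 0 m); split.
- exact (triangulation_triangulate t_mono no_il m2).
- move=> e eE1; have eA : e \in E1 :|: E2 by rewrite inE eE1.
  by apply: (triangulate_edge_le t_mono no_il eA); apply: edges; rewrite inE eA.
- move=> e eE2; have eA : e \in E1 :|: E2 by rewrite inE eE2 orbT.
  have eB : e \in E2 :|: E3 by rewrite inE eE2.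
  by apply: (triangulate_edge_in no_il m2 eA eB); apply: edges; rewrite inE eA.
- move=> e eE3; have eB : e \in E2 :|: E3 by rewrite inE eE3 orbT.
  by apply: (triangulate_le_edge t_mono no_il eB); apply: edges; rewrite !inE eE3 orbT.
Qed.
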